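(* Let $N\ge1$ and $L=\sum_{i=0}^N a_i(x)\partial_x^i$ with $a_i(x)=\sum_{j=0}^i a_{i,j}x^j$ complex polynomials, $a_0\equiv0$, $a_i\equiv0$ for $i>N$, and let $\delta_n^{(k)}=\sum_{i=k}^n\binom ni i!\,a_{i,i-k}$ ($0\le k\le n$). Suppose there are $\lambda_n\in\mathbb{C}$ ($n\ge0$, $\lambda_0=0$, $\lambda_n\notin\{0,\lambda_1,\ldots,\lambda_{n-1}\}$ for $n\ge1$) and monic polynomials $P_n(x)=\sum_{i=0}^nb_{n,i}x^i$ of degree $n$ with $\sum_{i=1}^Na_i\partial_x^iP_n=\lambda_nP_n$ for all $n\ge0$. Then for every $n\ge1$ and $k=1,\ldots,n$, $$(-1)^{k+1}\delta_n^{(k)}=\sum_{s=1}^n\Delta_{k,n,s}\,s!\,a_{s,s},$$ where $\Delta_{k,n,s}$ is the determinant of the $k\times k$ matrix $D$ with first row $D_{1,c}=\left[\binom{n-k}{s-1}+\binom{n-k+1}{s-1}+\cdots+\binom{n-k+c-1}{s-1}\right]b_{n-k+c,\,n-k}$ ($1\le c\le k$) and, for $2\le\rho\le k$, $D_{\rho,c}=b_{n-k+c,\;n-k+\rho-1}$.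
   Context: Conventions: $b_{m,m}=1$, $b_{m,l}=0$ for $l>m$; $\binom{m}{s-1}=0$ for $m<s-1$; $a_{s,s}=0$ for $s>N$. $\partial_x^i$ is the $i$-th derivative in $x$. *)

From HB Require Import structures.
From mathcomp Require Import all_boot all_order all_algebra.
From mathcomp Require Import complex.
From mathcomp Require Import reals.
Set Implicit Arguments. Unset Strict Implicit. Unset Printing Implicit Defensive.
Import Order.TTheory GRing.Theory Num.Theory.
Local Open Scope ring_scope.

Section Defs.
Variable C : fieldType.

Definition delta (a : nat -> {poly C}) (n k : nat) : C :=
  \sum_(k <= i < n.+1) ('C(n, i))%:R * (i`!)%:R * (a i)`_(i - k).

(* Delta_{k,n,s}: determinant of the k x k matrix D (0-based indices r, c). *)
Definition Dmat (P : nat -> {poly C}) (k n s : nat) : 'M[C]_k :=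
  \matrix_(r < k, c < k)
    if r == 0%N :> nat then
      (\sum_(0 <= t < c.+1) ('C(n - k + t, s - 1))%:R) * (P (n - k + c.+1)%N)`_(n - k)
    else (P (n - k + c.+1)%N)`_(n - k + r).

Definition Delta (P : nat -> {poly C}) (k n s : nat) : C := \det (Dmat P k n s).
End Defs.

From HB Require Import structures.
From mathcomp Require Import all_boot all_order all_algebra.
From mathcomp Require Import complex.
From mathcomp Require Import reals.
From mathcomp Require Import zify ring.
Import Order.TTheory GRing.Theory Num.Theory.
Local Open Scope ring_scope.

(* Comparing coefficients of x^l in L P_j = lambda_j P_j gives
   (lambda_j - lambda_l) b_{j,l} = sum_{d >= 1} delta_{l+d}^(d) b_{j,l+d}, and for l = j
   lambda_j = delta_j^(0) = sum_s C(j,s) s! a_{s,s}.  Put m = n - k.  For l = m and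
   j = m+1, ..., n these k relations say that the row ((lambda_j - lambda_m) b_{j,m})_j is
   x B, with x = (delta_{m+d}^(d))_{d=1..k} and B = (b_{m+c,m+d})_{d,c} unitriangular.
   Let E have first row x and then the unit rows e_1, ..., e_{k-1}, so that
   det E = (-1)^(k+1) delta_n^(k).  The rows of E B after the first are those of D, and
   by the hockey-stick identity its first row is sum_s s! a_{s,s} times the first row of D
   for that s; multilinearity of the determinant in the first row concludes. *)

Lemma sumr_nat_widen (V : nmodType) (F : nat -> V) m' m n n' :
  (m' <= m)%N -> (m <= n)%N -> (n <= n')%N ->
  (forall i, (m' <= i < m)%N -> F i = 0) ->
  (forall i, (n <= i < n')%N -> F i = 0) ->
  \sum_(m <= i < n) F i = \sum_(m' <= i < n') F i.
Proof.
move=> le_m'm le_mn le_nn' F0l F0r.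
rewrite [RHS](big_cat_nat le_m'm (leq_trans le_mn le_nn')) /=.
rewrite [in RHS](big_cat_nat le_mn le_nn') /=.
rewrite [X in X + _]big_nat_cond [X in _ + (_ + X)]big_nat_cond.
rewrite [X in X + _]big1 ?add0r; last by move=> i /andP[/F0l].
by rewrite [X in _ + X]big1 ?addr0 // => i /andP[/F0r].
Qed.

Lemma coef_mul_derivn (R : comNzRingType) (q p : {poly R}) i l :
  (size q <= i.+1)%N ->
  (q * p^`(i))`_l =
    \sum_(0 <= d < i.+1) 'C(l + d, i)%:R * i`!%:R * q`_(i - d) * p`_(l + d).
Proof.
move=> size_q.
pose H u := 'C(l + i - u, i)%:R * i`!%:R * q`_u * p`_(l + i - u).
have widen_H j : (j <= l + i)%N ->
    (forall u, (j < u < l + i + 1)%N -> H u = 0) ->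
    \sum_(0 <= u < j.+1) H u = \sum_(0 <= u < l + i + 1) H u.
  by move=> le_j H0; apply: sumr_nat_widen => //; lia.
transitivity (\sum_(0 <= u < l.+1) H u).
  rewrite coefM big_mkord; apply: eq_bigr => u _.
  rewrite coef_derivn -bin_ffact -mulr_natl natrM mulrCA mulrA.
  suff -> : (i + (l - u) = l + i - u)%N by [].
  by move: (ltn_ord u); lia.
have H0_q u : (i < u)%N -> H u = 0.
  by move=> lt_iu; rewrite /H nth_default ?mulr0 ?mul0r // (leq_trans size_q).
have H0_bin u : (l < u <= l + i)%N -> H u = 0.
  by move=> /andP[lt_lu le_u]; rewrite /H bin_small ?mul0r //; lia.
rewrite (widen_H l) ?leq_addr //; last by move=> u /andP[lt_lu le_u]; apply: H0_bin; lia.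
rewrite -(widen_H i) ?leq_addl //; last by move=> u /andP[lt_iu _]; apply: H0_q.
rewrite big_nat_rev /=; apply: eq_big_nat => d /andP[_ lt_di].
by rewrite /H !add0n subSS; have -> : (l + i - (i - d) = l + d)%N by lia.
Qed.

Lemma bin_hockey_stick m c s :
  'C(m + c, s.+1) = ('C(m, s.+1) + \sum_(0 <= t < c) 'C(m + t, s))%N.
Proof.
elim: c => [|c IH]; first by rewrite big_geq ?addn0.
by rewrite big_nat_recr //= addnS binS IH addnA.
Qed.

Lemma det_sum_row {R : comPzRingType} {n} {i0 : 'I_n} {I : Type} {r : seq I}
    {w : I -> R} {A : 'M[R]_n} {F : I -> 'M[R]_n} :
  (forall i, row' i0 A = row' i0 (F i)) ->
  row i0 A = \sum_(i <- r) w i *: row i0 (F i) ->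
  \det A = \sum_(i <- r) w i * \det (F i).
Proof.
move=> eq_row' rowA.
have cofE i j : cofactor (F i) i0 j = cofactor A i0 j.
  rewrite /cofactor; congr (_ * \det _); apply/matrixP => u v.
  by have := congr1 (fun M : 'M_(n.-1, n) => M u (lift j v)) (eq_row' i); rewrite !mxE.
rewrite (expand_det_row A i0).
transitivity (\sum_j \sum_(i <- r) w i * F i i0 j * cofactor A i0 j).
  apply: eq_bigr => j _; have := congr1 (fun M : 'rV_n => M 0 j) rowA.
  rewrite mxE summxE => ->; rewrite mulr_suml.
  by apply: eq_bigr => i _; rewrite !mxE.
rewrite exchange_big; apply: eq_bigr => i _.
rewrite (expand_det_row (F i) i0) mulr_sumr.
by apply: eq_bigr => j _; rewrite cofE mulrA.
Qed.

Lemma det_subdiag_row0 (R : comPzRingType) k (x : 'I_k.+1 -> R) :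
  \det (\matrix_(i, j) if i == ord0 then x j else ((i : nat) == j.+1)%:R)
  = (-1) ^+ k * x ord_max.
Proof.
rewrite (expand_det_col _ ord_max) (bigD1 ord0) //= big1 => [|i ne_i0]; last first.
  by rewrite !mxE (negbTE ne_i0) ltn_eqF ?mul0r.
rewrite !mxE eqxx addr0 mulrC /cofactor add0n.
suff -> : row' ord0 (col' ord_max (\matrix_(i, j) if i == ord0 then x j
            else ((i : nat) == j.+1)%:R)) = 1%:M by rewrite det1 mulr1.
by apply/matrixP => u v; rewrite !mxE /= /bump leq0n leqNgt ltn_ord.
Qed.

Section DiffOperator.
Context {C : fieldType} {N : nat} {a : nat -> {poly C}}.
Hypothesis size_a : forall i, (size (a i) <= i.+1)%N.
Hypothesis a0 : a 0%N = 0.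
Hypothesis a_gt : forall i, (N < i)%N -> a i = 0.

Lemma coef_diffop (p : {poly C}) l :
  (\sum_(1 <= i < N.+1) a i * p^`(i))`_l =
    \sum_(0 <= d < N.+1) delta a (l + d) d * p`_(l + d).
Proof.
pose T i d := 'C(l + d, i)%:R * i`!%:R * (a i)`_(i - d) * p`_(l + d).
pose G d i := if (d <= i)%N then T i d else 0.
have G0_a d i : (i == 0%N) || (N < i)%N -> G d i = 0.
  by case/orP => [/eqP-> | /a_gt ai0]; rewrite /G /T ?a0 ?ai0 coef0 mulr0 mul0r if_same.
have G0_bin d i : (l + d < i)%N -> G d i = 0.
  by move=> lt_i; rewrite /G /T bin_small ?mul0r ?if_same.
transitivity (\sum_(1 <= i < N.+1) \sum_(0 <= d < N.+1) G d i).
  rewrite coef_sum; apply: eq_big_nat => i /andP[_ le_iN].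
  rewrite coef_mul_derivn // (eq_big_nat _ _ (F2 := G^~ i)); last first.
    by move=> d /andP[_ le_di]; rewrite /G -ltnS le_di.
  by apply: sumr_nat_widen => // d /andP[lt_id _]; rewrite /G leqNgt lt_id.
rewrite exchange_big_nat; apply: eq_big_nat => d _.
rewrite /delta mulr_suml.
transitivity (\sum_(0 <= i < N + l + d + 1) G d i).
  apply: sumr_nat_widen => //; first lia.
  - by move=> i /andP[_ lt_i1]; apply: G0_a; rewrite -leqn0 -ltnS lt_i1.
  - by move=> i /andP[lt_Ni _]; apply: G0_a; rewrite lt_Ni orbT.
symmetry; rewrite (eq_big_nat _ _ (F2 := G d)); last first.
  by move=> i /andP[le_di _]; rewrite /G le_di.
apply: sumr_nat_widen => //; [lia | lia | |].
- by move=> i /andP[_ lt_id]; rewrite /G leqNgt lt_id.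
- by move=> i /andP[lt_i _]; apply: G0_bin.
Qed.

Lemma delta_gt l d : (N < d)%N -> delta a (l + d) d = 0.
Proof.
move=> lt_Nd; rewrite /delta big_nat_cond big1 // => i /andP[/andP[le_di _] _].
by rewrite a_gt ?coef0 ?mulr0 // (leq_trans lt_Nd).
Qed.

Lemma delta0E n j : (j <= n)%N ->
  delta a j 0 = \sum_(1 <= s < n.+1) 'C(j, s)%:R * s`!%:R * (a s)`_s.
Proof.
move=> le_jn; rewrite /delta; under eq_bigr do rewrite subn0.
transitivity (\sum_(0 <= s < n.+1) 'C(j, s)%:R * s`!%:R * (a s)`_s).
  by apply: sumr_nat_widen => // s /andP[lt_js _]; rewrite bin_small ?mul0r.
symmetry; apply: sumr_nat_widen => // s; last lia.
by rewrite ltnS leqn0 => /eqP->; rewrite a0 coef0 mulr0.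
Qed.

Section EigenPolynomials.
Context {lambda : nat -> C} {P : nat -> {poly C}}.
Hypothesis P_monic : forall n, size (P n) = n.+1 /\ P n \is monic.
Hypothesis P_eigen :
  forall n, \sum_(1 <= i < N.+1) a i * (P n)^`(i) = lambda n *: P n.

Lemma coefP_lead j : (P j)`_j = 1.
Proof. by have [size_P /monicP] := P_monic j; rewrite lead_coefE size_P. Qed.

Lemma coefP_gt j t : (j < t)%N -> (P j)`_t = 0.
Proof. by move=> lt_jt; rewrite nth_default // (proj1 (P_monic j)). Qed.

Lemma eigen_coef j l :
  lambda j * (P j)`_l = \sum_(0 <= d < N.+1) delta a (l + d) d * (P j)`_(l + d).
Proof. by rewrite -coefZ -P_eigen coef_diffop. Qed.

Lemma eigenvalueE j : lambda j = delta a j 0.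
Proof.
have := eigen_coef j j; rewrite coefP_lead mulr1 => ->.
rewrite big_ltn // addn0 coefP_lead mulr1 big_nat_cond big1 ?addr0 //.
by move=> d /andP[/andP[lt_0d _] _]; rewrite coefP_gt ?mulr0 // -addn1 leq_add2l.
Qed.

Lemma eigen_coefB j l K : (l < j)%N -> (j - l <= K)%N ->
  (lambda j - lambda l) * (P j)`_l =
    \sum_(1 <= d < K.+1) delta a (l + d) d * (P j)`_(l + d).
Proof.
move=> lt_lj le_K.
rewrite mulrBl eigen_coef (eigenvalueE l) big_ltn // addn0 addrC addKr.
pose F d := delta a (l + d) d * (P j)`_(l + d).
transitivity (\sum_(1 <= d < (N + K).+1) F d).
  apply: sumr_nat_widen => //; [lia | lia | ].
  by move=> d /andP[lt_Nd _]; rewrite /F delta_gt ?mul0r.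
symmetry; apply: sumr_nat_widen => //; [lia | lia | ].
by move=> d /andP[lt_Kd _]; rewrite /F coefP_gt ?mulr0 //; lia.
Qed.

Section RecurrenceMatrix.
Variables n k : nat.
Hypothesis lt_kn : (k < n)%N.
Let m := (n - k.+1)%N.

Definition coefmx : 'M[C]_k.+1 := \matrix_(d, c) (P (m + c.+1))`_(m + d.+1).

Definition deltamx : 'M[C]_k.+1 :=
  \matrix_(i, j) if i == ord0 then delta a (m + j.+1) j.+1 else ((i : nat) == j.+1)%:R.

Lemma det_coefmx : \det coefmx = 1.
Proof.
rewrite -det_tr det_trig; last first.
  by apply/is_trig_mxP => d c lt_dc; rewrite !mxE coefP_gt // ltn_add2l.
by apply: big1 => d _; rewrite !mxE coefP_lead.
Qed.

Lemma row'_deltamx_mul s : row' ord0 (deltamx *m coefmx) = row' ord0 (Dmat P k.+1 n s).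
Proof.
apply/matrixP => u c; rewrite !mxE (bigD1 (widen_ord (leqnSn k) u)) //= big1.
  by rewrite !mxE /= eqxx mul1r addr0.
move=> d; rewrite -val_eqE /= => /negbTE ne_du.
by rewrite !mxE /= eqSS eq_sym ne_du mul0r.
Qed.

Lemma row0_deltamx_mul :
  row ord0 (deltamx *m coefmx) =
    \sum_(1 <= s < n.+1) (s`!%:R * (a s)`_s) *: row ord0 (Dmat P k.+1 n s).
Proof.
apply/rowP => c; rewrite !mxE summxE.
have le_mc : (m + c.+1 <= n)%N by rewrite /m; move: (ltn_ord c); lia.
transitivity ((lambda (m + c.+1) - lambda m) * (P (m + c.+1))`_m).
  rewrite (eigen_coefB (m + c.+1) m k.+1); [|lia|lia].
  rewrite big_add1 /= big_mkord.
  by apply: eq_bigr => d _; rewrite !mxE.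
rewrite !eigenvalueE !(delta0E n) ?(leq_trans (leq_addr _ _) le_mc) //.
rewrite -sumrB mulr_suml; apply: eq_big_nat => -[//|s] _.
rewrite !mxE /= subn1 /= -natr_sum -/m.
have -> : 'C(m + c.+1, s.+1) = ('C(m, s.+1) + \sum_(0 <= t < c.+1) 'C(m + t, s))%N.
  exact: bin_hockey_stick.
by rewrite natrD; ring.
Qed.

End RecurrenceMatrix.

Theorem sum_Delta n k : (k < n)%N ->
  (-1) ^+ k.+2 * delta a n k.+1 =
    \sum_(1 <= s < n.+1) Delta P k.+1 n s * s`!%:R * (a s)`_s.
Proof.
move=> lt_kn.
have := det_sum_row (F := Dmat P k.+1 n) (row'_deltamx_mul n k) (row0_deltamx_mul n k lt_kn).
rewrite det_mulmx det_coefmx mulr1 /deltamx det_subdiag_row0 /= subnK //.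
rewrite !exprS !mulN1r opprK => ->.
by apply: eq_bigr => s _; rewrite mulrC mulrA.
Qed.

End EigenPolynomials.
End DiffOperator.

Theorem lemma3 (R : realType) (N : nat) (a : nat -> {poly R[i]})
  (lambda : nat -> R[i]) (P : nat -> {poly R[i]}) :
  (1 <= N)%N ->
  (forall i, (size (a i) <= i.+1)%N) ->
  a 0%N = 0 ->
  (forall i, (N < i)%N -> a i = 0) ->
  lambda 0%N = 0 ->
  (forall n m, (m < n)%N -> lambda n != lambda m) ->
  (forall n, size (P n) = n.+1 /\ P n \is monic) ->
  (forall n, \sum_(1 <= i < N.+1) a i * (P n)^`(i) = lambda n *: P n) ->
  forall n k, (1 <= n)%N -> (1 <= k <= n)%N ->
    (-1) ^+ k.+1 * delta a n k =
    \sum_(1 <= s < n.+1) Delta P k n s * (s`!)%:R * (a s)`_s.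
Proof.
move=> _ size_a a0 a_gt _ _ P_monic P_eigen n [//|k] _ /andP[_ lt_kn].
exact (sum_Delta size_a a0 a_gt P_monic P_eigen n k lt_kn).
Qed.
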